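(* Let $d\in\mathbb{N}$, $a\in\mathbb{R}$, $b\in(a,\infty)$. For every $v=(v_1,\dots,v_{d+1})\in\mathbb{R}^{d+1}$ let $I^v=\{x\in[a,b]^d\colon v_{d+1}+\sum_{i=1}^d v_ix_i>0\}$. Let $\lambda_d$ denote the Lebesgue measure on $\mathbb{R}^d$, let $p\colon[a,b]^d\to[0,\infty)$ be bounded and measurable, and let $u\in\mathbb{R}^{d+1}\setminus\{0\}$. Then there exist $\varepsilon,C\in(0,\infty)$ such that for all $v,w\in\mathbb{R}^{d+1}$ with $\max\{\|u-v\|,\|u-w\|\}\le\varepsilon$ it holds that $$\int_{I^v\,\Delta\, I^w}p(x)\,\lambda_d(\mathrm{d}x)\le C\|v-w\|,$$ where $\Delta$ denotes the symmetric difference of sets.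
   Context: $\|\cdot\|$ denotes the Euclidean norm. *)

From HB Require Import structures.
From mathcomp Require Import all_boot all_order all_algebra.
From mathcomp Require Import all_classical all_reals all_analysis.
Set Implicit Arguments. Unset Strict Implicit. Unset Printing Implicit Defensive.
Import Order.TTheory GRing.Theory Num.Theory.
Import numFieldNormedType.Exports.
Local Open Scope classical_set_scope.
Local Open Scope ring_scope.

Definition enorm (R : realType) (n : nat) (v : 'rV[R]_n) : R :=
  Num.sqrt (\sum_(i < n) (v ord0 i) ^+ 2).

(* Lebesgue measure lambda_n on R^n = n.-tuple R (with its product sigma-algebra),
   built as iterated product measure:
   lambda_0 = Dirac mass at the empty tuple,
   lambda_{n+1} = image of (lebesgue_measure (x) lambda_n) under (x, t) |-> x :: t. *)
Fixpoint lebesgue_tuple (R : realType) (n : nat) : set (n.-tuple R) -> \bar R :=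
  match n with
  | 0 => fun A => dirac [tuple] A
  | n'.+1 => pushforward ((@lebesgue_measure R) \x^ (@lebesgue_tuple R n'))%E
               (fun p : R * n'.-tuple R => [tuple of p.1 :: p.2])
  end.

Definition cube (R : realType) (d : nat) (a b : R) : set (d.-tuple R) :=
  [set x | forall i : 'I_d, a <= tnth x i <= b].

(* I^v = { x in [a,b]^d : v_{d+1} + sum_{i=1}^d v_i x_i > 0 } for v in R^{d+1};
   coordinates v_1..v_d are v 0 (widen i), v_{d+1} is v 0 ord_max. *)
Definition Iset (R : realType) (d : nat) (a b : R) (v : 'rV[R]_d.+1)
  : set (d.-tuple R) :=
  [set x | cube a b x /\
     0 < v ord0 ord_max + \sum_(i < d) v ord0 (widen_ord (leqnSn d) i) * tnth x i].

Definition symdiff (T : Type) (A B : set T) : set T := (A `\` B) `|` (B `\` A).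

From HB Require Import structures.
From mathcomp Require Import all_boot all_order all_algebra.
From mathcomp Require Import all_classical all_reals all_analysis.
From mathcomp Require Import measurable_realfun ring lra.
Import Order.TTheory GRing.Theory Num.Theory.
Import numFieldNormedType.Exports.
Local Open Scope classical_set_scope.
Local Open Scope ring_scope.
Set Implicit Arguments. Unset Strict Implicit. Unset Printing Implicit Defensive.

(* Write L_v(x) = v_{d+1} + sum_i v_i x_i, so that I^v is the part of the cube where L_v > 0,
   and note |L_v(x) - L_w(x)| <= K ||v - w|| on the cube.
   If some slope u_j is nonzero, then for v, w near u the symmetric difference of I^v and I^w
   lies in the slab {|L_v| <= K ||v - w||}, whose volume is at most 2 K ||v - w|| / |v_j| times
   the volume of a face of the cube (Fubini along the j-th coordinate), and |v_j| >= |u_j| / 2.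
   If all slopes of u vanish, L_u is the nonzero constant u_{d+1}, so L_v and L_w have its sign
   on the whole cube and I^v = I^w. Since p is bounded, the integral is controlled by the volume. *)

Section cons_measure.
Local Open Scope ereal_scope.
Context (R : realType) (n : nat) (mu : {sigma_finite_measure set (n.-tuple R) -> \bar R}).

Definition tuple_cons (p : R * n.-tuple R) : n.+1.-tuple R := [tuple of p.1 :: p.2].

Lemma measurable_tuple_cons : measurable_fun setT tuple_cons.
Proof. exact: measurable_cons. Qed.

Definition cons_measure := pushforward (@lebesgue_measure R \x^ mu) tuple_cons.

Let cons_measure0 : cons_measure set0 = 0.
Proof. by rewrite /cons_measure /pushforward preimage_set0 measure0. Qed.

Let cons_measure_ge0 A : 0 <= cons_measure A.
Proof. exact: (measure_ge0 (@lebesgue_measure R \x^ mu)). Qed.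

Let cons_measure_sigma_additive : semi_sigma_additive cons_measure.
Proof.
move=> F mF tF mUF; rewrite /cons_measure /pushforward preimage_bigcup.
apply: measure_semi_sigma_additive.
- by move=> k; rewrite -[X in measurable X]setTI; exact: measurable_tuple_cons.
- apply/trivIsetP => /= i j _ _ ij; rewrite -preimage_setI.
  by move/trivIsetP : tF => /(_ _ _ _ _ ij) ->//; rewrite preimage_set0.
- by rewrite -preimage_bigcup -[X in measurable X]setTI; exact: measurable_tuple_cons.
Qed.

HB.instance Definition _ := isMeasure.Build _ _ _ cons_measure
  cons_measure0 cons_measure_ge0 cons_measure_sigma_additive.

Let cons_measure_sigma_finite : sigma_finite setT cons_measure.
Proof.
have /sigma_finiteP [G [GT Gnd Gfin]] := sigma_finiteT (@lebesgue_measure R).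
have /sigma_finiteP [F [FT Fnd Ffin]] := sigma_finiteT mu.
pose thd (x : n.+1.-tuple R) := thead x.
pose tbehead (x : n.+1.-tuple R) : n.-tuple R := [tuple of behead x].
exists (fun k => thd @^-1` G k `&` tbehead @^-1` F k).
  apply/seteqP; split => // x _.
  have [i _ Gi] : (\bigcup_k G k) (thd x) by rewrite -GT.
  have [j _ Fj] : (\bigcup_k F k) (tbehead x) by rewrite -FT.
  exists (maxn i j) => //; split.
  - by move: (Gnd _ _ (leq_maxl i j)) => /subsetPset; apply.
  - by move: (Fnd _ _ (leq_maxr i j)) => /subsetPset; apply.
move=> k /=; have [mG Gk_fin] := Gfin k; have [mF Fk_fin] := Ffin k; split.
  apply: measurableI; rewrite -[X in measurable X]setTI.
  - exact: (measurable_tnth ord0).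
  - exact: measurable_behead.
rewrite /cons_measure /pushforward.
have -> : tuple_cons @^-1` (thd @^-1` G k `&` tbehead @^-1` F k) = G k `*` F k.
  apply/seteqP; split => -[x y] [/= Gx Fy]; split => //;
    by move: Fy; congr (F k _); exact: val_inj.
rewrite product_measure2E //.
by rewrite lte_mul_pinfty // ge0_fin_numE.
Qed.

HB.instance Definition _ := Measure_isSigmaFinite.Build _ _ _ cons_measure
  cons_measure_sigma_finite.

End cons_measure.

Arguments tuple_cons {R n}.

(* [lebesgue_tuple] again, but built so that its sigma-finiteness is known to the library. *)
Fixpoint sf_lebesgue_tuple (R : realType) (n : nat)
    : {sigma_finite_measure set (n.-tuple R) -> \bar R} :=
  match n with
  | 0 => (@dirac _ _ ([tuple] : 0.-tuple R) R : {sigma_finite_measure set _ -> \bar R})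
  | n'.+1 => (cons_measure (sf_lebesgue_tuple R n') : {sigma_finite_measure set _ -> \bar R})
  end.

Lemma sf_lebesgue_tupleE (R : realType) n :
  sf_lebesgue_tuple R n = @lebesgue_tuple R n :> (set _ -> \bar R).
Proof. by elim: n => [//|n IH] /=; rewrite /cons_measure IH. Qed.

Lemma tnth_beheadS (T : Type) n (v : n.+1.-tuple T) (j : 'I_n) :
  tnth [tuple of behead v] j = tnth v (lift ord0 j).
Proof. by rewrite tnth_behead; congr tnth; apply: val_inj; rewrite /= inordK // ltnS. Qed.

Lemma measurable_symdiff d (T : measurableType d) (A B : set T) :
  measurable A -> measurable B -> measurable (symdiff A B).
Proof. by move=> mA mB; apply: measurableU; exact: measurableD. Qed.

Lemma integral_indicZl d (T : measurableType d) (R : realType)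
    (mu : {measure set T -> \bar R}) (D : set T) (k m : R) :
  measurable D -> 0 <= k -> mu D = m%:E -> (\int[mu]_x (k%:E * (\1_D x)%:E) = (k * m)%:E)%E.
Proof.
move=> mD k0 muD; rewrite ge0_integralZl ?lee_fin //.
- by rewrite integral_indic // setIT muD.
- by apply/measurable_EFinP; exact: measurable_indic.
Qed.

Lemma integral_le_bound_measure d (T : measurableType d) (R : realType)
    (mu : {measure set T -> \bar R}) (S : set T) (f : T -> R) (M : R) :
  measurable S -> measurable_fun S f -> (forall x, S x -> 0 <= f x <= M) ->
  (\int[mu]_(x in S) (f x)%:E <= M%:E * mu S)%E.
Proof.
move=> mS mf fM; rewrite -integral_cst //.
apply: ge0_le_integral => //.
- by move=> x /fM /andP [f0 _]; rewrite lee_fin.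
- exact/measurable_EFinP.
- by move=> x /fM /andP [_ fle]; rewrite lee_fin.
Qed.

Lemma lebesgue_measure_itvcc (R : realType) (x y : R) :
  x <= y -> lebesgue_measure `[x, y] = (y - x)%:E.
Proof.
rewrite lebesgue_measure_itv /= lte_fin le_eqVlt => /predU1P [->|->] //.
by rewrite ltxx subrr.
Qed.

Section slab.
Context (R : realType) (a b : R).

Definition affine n (c : R) (v x : n.-tuple R) := c + \sum_(i < n) tnth v i * tnth x i.

Definition slab n (c : R) (v : n.-tuple R) (t : R) :=
  [set x | cube a b x /\ `|affine c v x| <= t].

Lemma measurable_affine n c (v : n.-tuple R) : measurable_fun setT (affine c v).
Proof.
apply: measurable_funD; first exact: measurable_cst.
apply: measurable_sum => i; apply: measurable_funM; first exact: measurable_cst.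
exact: measurable_tnth.
Qed.

Lemma measurable_cube n : measurable (@cube R n a b).
Proof.
have -> : @cube R n a b = \bigcap_(i in [set: 'I_n]) ((@tnth n R)^~ i @^-1` `[a, b]).
  apply/seteqP; split => x /= cx i; last by have := cx i I; rewrite /= in_itv.
  by move=> _; rewrite /= in_itv; exact: cx.
apply: fin_bigcap_measurable; first exact: finite_finset.
by move=> i _; rewrite -[X in measurable X]setTI; exact: measurable_tnth.
Qed.

Lemma measurable_slab n c (v : n.-tuple R) t : measurable (slab c v t).
Proof.
have -> : slab c v t = cube a b `&` (affine c v @^-1` `[-t, t]).
  by apply/seteqP; split => x /=; rewrite in_itv /= -ler_norml.
apply: measurableI; first exact: measurable_cube.
by rewrite -[X in measurable X]setTI; exact: measurable_affine.
Qed.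

Lemma cube_tuple_cons n x0 (y : n.-tuple R) :
  cube a b (tuple_cons (x0, y)) <-> a <= x0 <= b /\ cube a b y.
Proof.
split => [cx|[x0ab cy] i].
  by split=> [|j]; [exact: (cx ord0)|rewrite -(tnthS x0); exact: cx].
by case: (unliftP ord0 i) => [j ->|->]; [rewrite tnthS; exact: cy|exact: x0ab].
Qed.

Lemma affine_tuple_cons n c (v : n.+1.-tuple R) x0 (y : n.-tuple R) :
  affine c v (tuple_cons (x0, y)) = affine (c + tnth v ord0 * x0) [tuple of behead v] y.
Proof.
rewrite /affine big_ord_recl -addrA; congr (_ + (_ + _)).
by apply: eq_bigr => i _; rewrite tnthS tnth_beheadS.
Qed.

Lemma slab_tuple_cons n c (v : n.+1.-tuple R) t x0 (y : n.-tuple R) :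
  slab c v t (tuple_cons (x0, y)) <->
  a <= x0 <= b /\ slab (c + tnth v ord0 * x0) [tuple of behead v] t y.
Proof.
rewrite /slab /= cube_tuple_cons affine_tuple_cons.
by split => [[[? ?] ?]|[? [? ?]]].
Qed.

End slab.

Arguments affine {R n}.
Arguments slab {R} a b {n}.

Lemma norm_affine1_le_itv (R : realType) (c v0 t : R) : v0 != 0 ->
  [set x | `|c + v0 * x| <= t] = `[- (c / v0) - t / `|v0|, - (c / v0) + t / `|v0|]%classic.
Proof.
move=> v00; apply/seteqP; split => x /=;
  rewrite in_itv /= -ler_distl opprK ler_pdivlMr ?normr_gt0 // -normrM;
  by rewrite (_ : (x + c / v0) * v0 = c + v0 * x) //; field.
Qed.

Section slab_measure.
Local Open Scope ereal_scope.
Context (R : realType) (a b : R) (ab : (a <= b)%R).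
Local Notation lambda := (sf_lebesgue_tuple R).

Lemma sf_lebesgue_tupleS n (A : set (n.+1.-tuple R)) :
  lambda n.+1 A = (lebesgue_measure \x^ lambda n) (tuple_cons @^-1` A).
Proof. by []. Qed.

Lemma sf_lebesgue_tupleS1 n (A : set (n.+1.-tuple R)) : measurable A ->
  lambda n.+1 A = (lebesgue_measure \x lambda n) (tuple_cons @^-1` A).
Proof.
move=> mA; rewrite sf_lebesgue_tupleS; apply/esym/product_measure_unique.
  by move=> A1 A2 mA1 mA2; exact: product_measure2E.
by rewrite -[X in measurable X]setTI; exact: measurable_tuple_cons.
Qed.

Lemma sf_lebesgue_tuple_cube n : lambda n (cube a b) = ((b - a) ^+ n)%:E.
Proof.
elim: n => [|n IH]; first by rewrite /= diracE mem_set // => -[].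
rewrite sf_lebesgue_tupleS.
have -> : tuple_cons @^-1` cube a b = `[a, b] `*` @cube R n a b.
  by apply/seteqP; split => -[x0 y] /=; rewrite cube_tuple_cons /= in_itv.
rewrite product_measure2E //; last exact: measurable_cube.
transitivity ((b - a)%:E * ((b - a) ^+ n)%:E); last by rewrite -EFinM exprS.
by congr (_ * _); [exact: lebesgue_measure_itvcc|exact: IH].
Qed.

Lemma sf_lebesgue_tuple_slab_head n c (v : n.+1.-tuple R) t :
  tnth v ord0 != 0%R -> (0 <= t)%R ->
  lambda n.+1 (slab a b c v t) <= (2 * t / `|tnth v ord0| * (b - a) ^+ n)%:E.
Proof.
move=> v00 t0; set k := (2 * t / `|tnth v ord0|)%R.
have k0 : (0 <= k)%R by rewrite divr_ge0 ?mulr_ge0.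
rewrite sf_lebesgue_tupleS /product_measure2 /=.
set A := tuple_cons @^-1` slab a b c v t.
have mA : measurable A.
  by rewrite -[A]setTI; apply: measurable_tuple_cons => //; exact: measurable_slab.
apply: (@le_trans _ _ (\int[lambda n]_y (k%:E * (\1_(cube a b) y)%:E))).
  apply: ge0_le_integral => //.
  - exact: measurable_fun_ysection.
  - by apply/measurable_funeM/measurable_EFinP/measurable_indic; exact: measurable_cube.
  move=> y _; rewrite indicE; case: (boolP (y \in cube a b)) => [_|/negP ync].
    rewrite mule1; set c' := affine c [tuple of behead v] y.
    have -> : k%:E = lebesgue_measure [set x | `|c' + tnth v ord0 * x| <= t]%R.
      rewrite norm_affine1_le_itv // lebesgue_measure_itvcc.
        by congr EFin; rewrite /k; ring.
      by have := divr_ge0 t0 (normr_ge0 (tnth v ord0)); lra.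
    apply: le_measure; rewrite ?inE; first exact: measurable_ysection.
      by rewrite norm_affine1_le_itv //; exact: measurable_itv.
    move=> x; rewrite /ysection /= inE /A /= slab_tuple_cons => -[_ [_]].
    by rewrite /c' /affine addrAC.
  rewrite mule0 (_ : ysection A y = set0) ?measure0 //.
  apply/seteqP; split => x //; rewrite /ysection /= inE /A /= slab_tuple_cons.
  by move=> [_ [cy _]]; apply: ync; exact: mem_set.
by rewrite (integral_indicZl (measurable_cube a b (n := n)) k0 (sf_lebesgue_tuple_cube n)).
Qed.

Lemma sf_lebesgue_tuple_slab_tail n c (v : n.+1.-tuple R) t (k : R) : (0 <= k)%R ->
  (forall c', lambda n (slab a b c' [tuple of behead v] t) <= k%:E) ->
  lambda n.+1 (slab a b c v t) <= (k * (b - a))%:E.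
Proof.
move=> k0 slab_le; rewrite sf_lebesgue_tupleS1 /product_measure1 /=; last exact: measurable_slab.
set A := tuple_cons @^-1` slab a b c v t.
have mA : measurable A.
  by rewrite -[A]setTI; apply: measurable_tuple_cons => //; exact: measurable_slab.
apply: (@le_trans _ _ (\int[lebesgue_measure]_x (k%:E * (\1_`[a, b] x)%:E))).
  apply: ge0_le_integral => //.
  - exact: measurable_fun_xsection.
  - by apply/measurable_funeM/measurable_EFinP/measurable_indic; exact: measurable_itv.
  move=> x _; rewrite indicE; case: (boolP (x \in `[a, b]%classic)) => [|/negP] xab.
    rewrite mule1.
    rewrite (_ : xsection A x = slab a b (c + tnth v ord0 * x)%R [tuple of behead v] t) //.
    move: xab => /set_mem; rewrite /= in_itv => xab.
    apply/seteqP; split => y; rewrite /xsection /= inE /A /= slab_tuple_cons; first by case.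
    by split.
  rewrite mule0 (_ : xsection A x = set0) ?measure0 //.
  apply/seteqP; split => y //; rewrite /xsection /= inE /A /= slab_tuple_cons => -[x0ab _].
  by apply: xab; apply/mem_set; rewrite /= in_itv.
by rewrite (integral_indicZl (mu := lebesgue_measure) (measurable_itv _) k0
  (lebesgue_measure_itvcc ab)).
Qed.

(* Fubini along the coordinate j: the slab meets each line parallel to e_j in an interval of
   length at most 2t/|v_j|. *)
Lemma sf_lebesgue_tuple_slab n c (v : n.-tuple R) t (j : 'I_n) :
  tnth v j != 0%R -> (0 <= t)%R ->
  lambda n (slab a b c v t) <= (2 * t / `|tnth v j| * (b - a) ^+ n.-1)%:E.
Proof.
elim: n c v j => [|n IH] c v j vj0 t0; first by case: j vj0.
case: (unliftP ord0 j) vj0 => [j' -> {j}|-> vj0]; last exact: sf_lebesgue_tuple_slab_head.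
rewrite -tnth_beheadS => vj0.
case: n => [|n] in v j' IH vj0 *; first by case: j' vj0.
rewrite [_.-1]/= exprSr mulrA; apply: sf_lebesgue_tuple_slab_tail => [|c'].
  by rewrite mulr_ge0 ?exprn_ge0 ?subr_ge0 // divr_ge0 ?mulr_ge0.
exact: IH.
Qed.

End slab_measure.

Section enorm.
Context (R : realType) (n : nat).

Lemma enorm_ge0 (v : 'rV[R]_n) : 0 <= enorm v.
Proof. exact: sqrtr_ge0. Qed.

Lemma enormN (v : 'rV[R]_n) : enorm (- v) = enorm v.
Proof. by rewrite /enorm; congr Num.sqrt; apply: eq_bigr => i _; rewrite mxE sqrrN. Qed.

Lemma coord_le_enorm (v : 'rV[R]_n) i : `|v ord0 i| <= enorm v.
Proof.
rewrite /enorm -sqrtr_sqr ler_sqrt ?sumr_ge0 // => [|k _]; last exact: sqr_ge0.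
by rewrite (bigD1 i) //= lerDl sumr_ge0 // => k _; exact: sqr_ge0.
Qed.

Lemma coord_dist_le_enorm (u v : 'rV[R]_n) i : `|u ord0 i| - enorm (u - v) <= `|v ord0 i|.
Proof.
have := coord_le_enorm (u - v) i; rewrite !mxE.
have := lerB_dist (u ord0 i) (v ord0 i); lra.
Qed.

End enorm.

Section affine_bounds.
Context (R : realType).

Lemma normr_le_bounds (a b x : R) : a <= x <= b -> `|x| <= `|a| + `|b|.
Proof.
move=> /andP [ax xb]; rewrite ler_norml.
have := ler_norm b; have := ler_norm (- a); rewrite normrN.
by have := normr_ge0 a; have := normr_ge0 b => *; apply/andP; split; lra.
Qed.

Lemma affine_dist_le n (c c' : R) (v v' x : n.-tuple R) (e B : R) :
  `|c - c'| <= e -> (forall i, `|tnth v i - tnth v' i| <= e) ->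
  (forall i, `|tnth x i| <= B) ->
  `|affine c v x - affine c' v' x| <= e * (1 + n%:R * B).
Proof.
move=> ce ve xB.
have -> : affine c v x - affine c' v' x =
    (c - c') + \sum_(i < n) (tnth v i - tnth v' i) * tnth x i.
  under [X in _ = _ + X]eq_bigr => i _ do rewrite mulrBl.
  by rewrite sumrB /affine; ring.
rewrite mulrDr mulr1; apply: (le_trans (ler_normD _ _)); apply: lerD => //.
apply: (le_trans (ler_norm_sum _ _ _)).
apply: (@le_trans _ _ (\sum_(i < n) e * B)).
  by apply: ler_sum => i _; rewrite normrM; apply: ler_pM.
by rewrite sumr_const card_ord [in leRHS]mulr_natl mulrnAr.
Qed.

Lemma gt0_eq_of_dist_le_half (x y : R) : `|x - y| <= `|y| / 2 -> (0 < x) = (0 < y).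
Proof.
rewrite ler_norml => /andP [h1 h2]; case: (ltrgtP 0 y) => hy.
- by rewrite gtr0_norm // in h1 h2; apply/idP; lra.
- by rewrite ltr0_norm // in h1 h2; apply/negbTE; rewrite -leNgt; lra.
- by rewrite -hy normr0 in h1 h2 *; apply/negbTE; rewrite -leNgt; lra.
Qed.

Lemma normr_le_of_gt0_neq (x y e : R) : (0 < x) != (0 < y) -> `|x - y| <= e -> `|x| <= e.
Proof.
rewrite !ler_norml; case: (ltP 0 x); case: (ltP 0 y) => //= hy hx _ /andP [h1 h2];
  apply/andP; split; lra.
Qed.

End affine_bounds.

Section Iset_symdiff.
Context (R : realType) (a b : R) (d : nat).

Definition offset (v : 'rV[R]_d.+1) := v ord0 ord_max.

Definition slopes (v : 'rV[R]_d.+1) : d.-tuple R :=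
  [tuple v ord0 (widen_ord (leqnSn d) i) | i < d].

Let K := 1 + d%:R * (`|a| + `|b|).

Let K_gt0 : 0 < K.
Proof. by rewrite ltr_wpDr // mulr_ge0 // addr_ge0. Qed.

Lemma affine_offset_slopes (v : 'rV[R]_d.+1) x : affine (offset v) (slopes v) x =
  v ord0 ord_max + \sum_(i < d) v ord0 (widen_ord (leqnSn d) i) * tnth x i.
Proof. by rewrite /affine; under eq_bigr => i _ do rewrite tnth_mktuple. Qed.

Lemma IsetE (v : 'rV[R]_d.+1) :
  Iset a b v = [set x | cube a b x /\ 0 < affine (offset v) (slopes v) x].
Proof. by rewrite /Iset; apply/funext => x /=; rewrite affine_offset_slopes. Qed.

Lemma measurable_Iset (v : 'rV[R]_d.+1) : measurable (Iset a b v).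
Proof.
have -> : Iset a b v = cube a b `&` (affine (offset v) (slopes v) @^-1` `]0, +oo[).
  by rewrite IsetE; apply/seteqP; split => x /=; rewrite in_itv /= andbT.
apply: measurableI; first exact: measurable_cube.
by rewrite -[X in measurable X]setTI; exact: measurable_affine.
Qed.

Lemma affine_Iset_dist (v w : 'rV[R]_d.+1) x : cube a b x ->
  `|affine (offset v) (slopes v) x - affine (offset w) (slopes w) x| <= enorm (v - w) * K.
Proof.
move=> cx; apply: affine_dist_le.
- by have := coord_le_enorm (v - w) ord_max; rewrite !mxE.
- by move=> i; rewrite !tnth_mktuple; have := coord_le_enorm (v - w) (widen_ord (leqnSn d) i);
    rewrite !mxE.
- by move=> i; apply: normr_le_bounds; exact: cx.
Qed.

Lemma symdiff_Iset_sub_slab (v w : 'rV[R]_d.+1) :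
  symdiff (Iset a b v) (Iset a b w) `<=` slab a b (offset v) (slopes v) (enorm (v - w) * K).
Proof.
move=> x; rewrite /symdiff !IsetE => -[] [[cx x_in] x_out]; split => //;
  apply: normr_le_of_gt0_neq (affine_Iset_dist v w cx); apply/negP => /eqP vw;
  apply: x_out; split => //.
- by rewrite -vw.
- by rewrite vw.
Qed.

Lemma offset_slopes_eq0 (u : 'rV[R]_d.+1) :
  offset u = 0 -> (forall j, tnth (slopes u) j = 0) -> u = 0.
Proof.
move=> u0 flat; apply/rowP => k; rewrite mxE.
case: (unliftP ord_max k) => [j ->|->]; last exact: u0.
have -> : lift ord_max j = widen_ord (leqnSn d) j by apply: val_inj; exact: lift_max.
by have := flat j; rewrite tnth_mktuple.
Qed.

Lemma Iset_flat_stable (u v : 'rV[R]_d.+1) : (forall j, tnth (slopes u) j = 0) ->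
  enorm (u - v) * K <= `|offset u| / 2 -> Iset a b v = Iset a b u.
Proof.
move=> flat uv.
have Lu x : affine (offset u) (slopes u) x = offset u.
  by rewrite /affine big1 ?addr0 // => i _; rewrite flat mul0r.
have sign x : cube a b x ->
    (0 < affine (offset v) (slopes v) x) = (0 < affine (offset u) (slopes u) x).
  move=> cx; rewrite Lu; apply: gt0_eq_of_dist_le_half; apply: le_trans uv.
  by have := affine_Iset_dist v u cx; rewrite Lu -enormN opprB.
rewrite !IsetE; apply/seteqP; split => x /= [cx pos]; split => //.
- by rewrite -(sign x cx).
- by rewrite (sign x cx).
Qed.

Lemma measure_symdiff_Iset_slope (ab : a <= b) (u v w : 'rV[R]_d.+1) (j : 'I_d) :
  tnth (slopes u) j != 0 -> enorm (u - v) <= `|tnth (slopes u) j| / 2 ->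
  (sf_lebesgue_tuple R d (symdiff (Iset a b v) (Iset a b w)) <=
    (4 * K / `|tnth (slopes u) j| * (b - a) ^+ d.-1 * enorm (v - w))%:E)%E.
Proof.
move=> uj0 uv; set m := `|tnth (slopes u) j|.
have m0 : 0 < m by rewrite normr_gt0.
have mv : m / 2 <= `|tnth (slopes v) j|.
  have := coord_dist_le_enorm u v (widen_ord (leqnSn d) j).
  by move: uv; rewrite /m !tnth_mktuple; lra.
have vj0 : tnth (slopes v) j != 0 by rewrite -normr_gt0; apply: lt_le_trans mv; rewrite divr_gt0.
have dK0 : 0 <= enorm (v - w) * K by rewrite mulr_ge0 ?enorm_ge0 ?ltW.
apply: (@le_trans _ _
  (sf_lebesgue_tuple R d (slab a b (offset v) (slopes v) (enorm (v - w) * K)))).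
  apply: le_measure; rewrite ?inE; [|exact: measurable_slab|exact: symdiff_Iset_sub_slab].
  by apply: measurable_symdiff; exact: measurable_Iset.
apply: le_trans (sf_lebesgue_tuple_slab ab _ vj0 dK0) _; rewrite lee_fin.
rewrite [leRHS](_ : _ = 2 * (enorm (v - w) * K) / (m / 2) * (b - a) ^+ d.-1); last first.
  by field; rewrite gt_eqF.
apply: ler_wpM2r; first by rewrite exprn_ge0 ?subr_ge0.
apply: ler_wpM2l; first by rewrite mulr_ge0.
by rewrite lef_pV2 ?posrE ?normr_gt0 ?divr_gt0.
Qed.

Lemma measure_symdiff_Iset_lipschitz (ab : a < b) (u : 'rV[R]_d.+1) : u != 0 ->
  exists eps C : R, 0 < eps /\ 0 < C /\ forall v w : 'rV[R]_d.+1,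
    Num.max (enorm (u - v)) (enorm (u - w)) <= eps ->
    (sf_lebesgue_tuple R d (symdiff (Iset a b v) (Iset a b w)) <= (C * enorm (v - w))%:E)%E.
Proof.
move=> u0; have [[j uj0]|flat] := pselect (exists j, tnth (slopes u) j != 0).
  have m0 : 0 < `|tnth (slopes u) j| by rewrite normr_gt0.
  exists (`|tnth (slopes u) j| / 2), (4 * K / `|tnth (slopes u) j| * (b - a) ^+ d.-1).
  split; first by rewrite divr_gt0.
  split; first by rewrite mulr_gt0 ?exprn_gt0 ?subr_gt0 // divr_gt0 ?mulr_gt0.
  move=> v w; rewrite ge_max => /andP [uv _].
  exact: measure_symdiff_Iset_slope (ltW ab) u v w j uj0 uv.
have {}flat j : tnth (slopes u) j = 0 by apply/eqP/negP => /negP uj0; apply: flat; exists j.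
have u00 : offset u != 0 by apply: contra_neq u0 => /offset_slopes_eq0; exact.
exists (`|offset u| / (2 * K)), 1; split; first by rewrite divr_gt0 ?normr_gt0 ?mulr_gt0.
split => // v w; rewrite ge_max => /andP [uv uw].
have near z : enorm (u - z) <= `|offset u| / (2 * K) -> Iset a b z = Iset a b u.
  move=> uz; apply: Iset_flat_stable => //.
  by move: uz; rewrite ler_pdivlMr ?mulr_gt0 //; lra.
rewrite near // near // /symdiff setDv setU0 measure0 mul1r lee_fin.
exact: enorm_ge0.
Qed.

End Iset_symdiff.

Theorem lemma2p4 (R : realType) (d : nat) (a b : R) (hab : a < b)
  (p : d.-tuple R -> R)
  (p_meas : measurable_fun (cube a b) p)
  (p_ge0 : forall x, cube a b x -> 0 <= p x)
  (p_bdd : exists M : R, forall x, cube a b x -> p x <= M)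
  (u : 'rV[R]_d.+1) (hu : u != 0) :
  exists eps C : R, 0 < eps /\ 0 < C /\
    forall v w : 'rV[R]_d.+1,
      Num.max (enorm (u - v)) (enorm (u - w)) <= eps ->
      (\int[@lebesgue_tuple R d]_(x in symdiff (Iset a b v) (Iset a b w)) (p x)%:E
         <= (C * enorm (v - w))%:E)%E.
Proof.
have [M pM] := p_bdd; pose M1 := `|M| + 1.
have M1_gt0 : 0 < M1 by rewrite ltr_wpDl.
have [eps [C [eps0 [C0 lipC]]]] := measure_symdiff_Iset_lipschitz hab hu.
exists eps, (M1 * C); split => //; split; first by rewrite mulr_gt0.
move=> v w uvw; rewrite -sf_lebesgue_tupleE.
have sub_cube : symdiff (Iset a b v) (Iset a b w) `<=` cube a b by move=> x [] [[]].
have msymdiff := measurable_symdiff (measurable_Iset a b v) (measurable_Iset a b w).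
apply: le_trans (integral_le_bound_measure _ msymdiff _ (M := M1) _) _.
- exact: measurable_funS (measurable_cube a b (n := d)) sub_cube p_meas.
- move=> x /sub_cube cx; rewrite p_ge0 //=; apply: le_trans (pM x cx) _.
  by have := ler_norm M; rewrite /M1; lra.
by rewrite -mulrA EFinM; apply: lee_wpmul2l; [rewrite lee_fin ltW | exact: lipC].
Qed.
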